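(* Let $f(w)=\frac12w^TAw-b^Tw+c$ with $A\in\mathbb{R}^{n\times n}$ symmetric positive definite with eigenvalues $0<\lambda_1\le\dots\le\lambda_n$, and let $x^*=A^{-1}b$ be its unique minimizer. Let $x^1\in\mathbb{R}^n$ be arbitrary and let $\{x^k\}$ be generated by the Method of Ellipcenters (ME) described in the context. If ME stops at some iterate $x^k$, then $x^k=x^*$. Otherwise, $x^k\to x^*$ linearly: there exists $\eta\in[0,1)$ with $\eta\le 1-\frac{\lambda_1}{\lambda_n}$ such that for all $k\ge1$, $$f(x^{k+1})-f(x^* )\le \eta^k\,(f(x^1)-f(x^* ))\quad\text{and}\quad \|x^{k+1}-x^*\|_A\le (\sqrt{\eta})^k\,\|x^1-x^*\|_A.$$
   Context: $\|z\|_A=\sqrt{z^TAz}$, $\nabla f(w)=Aw-b$. Method of Ellipcenters (ME) for this $f$: given $x^k$, if $\nabla f(x^k)=0$ stop and return $x^k$. Otherwise set $t_k=\frac{2\nabla f(x^k)^T\nabla f(x^k)}{\nabla f(x^k)^TA\nabla f(x^k)}$ and $y^k=x^k-t_k\nabla f(x^k)$. If $g_x=\nabla f(x^k)$ and $g_y=\nabla f(y^k)$ are linearly independent, set $x^{k+1}=x^k+\alpha_kg_x+\beta_kg_y$, where, with $\Delta_k=\langle g_y,Ag_y\rangle\langle g_x,Ag_x\rangle-\langle g_x,Ag_y\rangle^2$, $\alpha_k=\frac{\langle g_y,g_x\rangle\langle g_x,Ag_y\rangle-\langle g_x,g_x\rangle\langle g_y,Ag_y\rangle}{\Delta_k}$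 and $\beta_k=\frac{-\langle g_y,g_x\rangle\langle g_x,Ag_x\rangle+\langle g_x,g_x\rangle\langle g_y,Ag_x\rangle}{\Delta_k}$ (equivalently, $x^{k+1}$ is the minimizer of $f$ over the affine plane $x^k+\mathrm{span}\{g_x,g_y\}$). If $g_x,g_y$ are linearly dependent, set $x^{k+1}=\frac12(x^k+y^k)$. Then increase $k$ by one and repeat. *)

From HB Require Import structures.
From mathcomp Require Import all_boot all_order all_algebra.
From mathcomp Require Import reals.
Set Implicit Arguments. Unset Strict Implicit. Unset Printing Implicit Defensive.
Import Order.TTheory GRing.Theory Num.Theory.
Local Open Scope ring_scope.

Section ME.
Variables (R : realType) (n : nat).

Definition dotv (u v : 'cV[R]_n) : R := (u^T *m v) 0 0.

Definition spd (A : 'M[R]_n) : Prop :=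
  A^T = A /\ forall z : 'cV[R]_n, z != 0 -> 0 < dotv z (A *m z).

Definition quadf (A : 'M[R]_n) (b : 'cV[R]_n) (c : R) (w : 'cV[R]_n) : R :=
  2^-1 * dotv w (A *m w) - dotv b w + c.

Definition gradf (A : 'M[R]_n) (b : 'cV[R]_n) (w : 'cV[R]_n) : 'cV[R]_n :=
  A *m w - b.

Definition normA (A : 'M[R]_n) (z : 'cV[R]_n) : R := Num.sqrt (dotv z (A *m z)).

Definition lin_indep2 (u v : 'cV[R]_n) : bool := row_free (col_mx u^T v^T).

(* One step of the Method of Ellipcenters, applied when grad f(x) <> 0. *)
Definition ME_step (A : 'M[R]_n) (b : 'cV[R]_n) (x : 'cV[R]_n) : 'cV[R]_n :=
  let gx := gradf A b x in
  let t := 2 * dotv gx gx / dotv gx (A *m gx) in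
  let y := x - t *: gx in
  let gy := gradf A b y in
  if lin_indep2 gx gy then
    let Delta := dotv gy (A *m gy) * dotv gx (A *m gx) - dotv gx (A *m gy) ^+ 2 in
    let alpha := (dotv gy gx * dotv gx (A *m gy) - dotv gx gx * dotv gy (A *m gy)) / Delta in
    let beta := (- (dotv gy gx * dotv gx (A *m gx)) + dotv gx gx * dotv gy (A *m gx)) / Delta in
    x + alpha *: gx + beta *: gy
  else 2^-1 *: (x + y).

End ME.

From HB Require Import structures.
From mathcomp Require Import all_boot all_order all_algebra.
From mathcomp Require Import reals complex ring.
Import Order.TTheory GRing.Theory Num.Theory.
Set Implicit Arguments.
Unset Strict Implicit.
Unset Printing Implicit Defensive.
Local Open Scope ring_scope.

(* Write E(z) = ||z - xs||_A^2 = 2 (f(z) - f(xs)).  The ME iterate minimises E over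
   the plane x + span{g, h}, which contains the exact steepest-descent point
   x - (g.g / g.Ag) g (when g and h are dependent, ME takes precisely that point).
   That point lowers E by (g.g)^2 / g.Ag, and since g.Ag <= lmax g.g and
   g.g = |A (x - xs)|^2 >= lmin E(x), each step multiplies E by at most
   1 - lmin/lmax.  Iterating gives the bound on f, and its square root the bound in
   the A-norm. *)

Section DotProduct.
Variables (R : realType) (n : nat).
Implicit Types (u v w : 'cV[R]_n).

Lemma dotvE u v : dotv u v = \sum_i u i 0 * v i 0.
Proof. by rewrite /dotv mxE; apply: eq_bigr => i _; rewrite mxE. Qed.

Lemma dotvC u v : dotv u v = dotv v u.
Proof. by rewrite !dotvE; apply: eq_bigr => i _; rewrite mulrC. Qed.

Lemma dotvDl u v w : dotv (u + v) w = dotv u w + dotv v w.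
Proof. by rewrite !dotvE -big_split; apply: eq_bigr => i _; rewrite mxE mulrDl. Qed.

Lemma dotvZl a u v : dotv (a *: u) v = a * dotv u v.
Proof. by rewrite !dotvE mulr_sumr; apply: eq_bigr => i _; rewrite mxE mulrA. Qed.

Lemma dotvDr u v w : dotv u (v + w) = dotv u v + dotv u w.
Proof. by rewrite dotvC dotvDl !(dotvC u). Qed.

Lemma dotvZr a u v : dotv u (a *: v) = a * dotv u v.
Proof. by rewrite dotvC dotvZl dotvC. Qed.

Lemma dotv_ge0 u : 0 <= dotv u u.
Proof. by rewrite dotvE sumr_ge0 // => i _; rewrite -expr2 sqr_ge0. Qed.

Lemma dotv_gt0 u : u != 0 -> 0 < dotv u u.
Proof.
move=> u0; rewrite lt_def dotv_ge0 andbT; apply: contra u0 => /eqP uu0.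
have /psumr_eq0P u2_eq0 : \sum_i u i 0 * u i 0 = 0 by rewrite -dotvE.
apply/eqP/matrixP => i j; rewrite ord1 mxE.
have /eqP : u i 0 * u i 0 = 0 by apply: u2_eq0 => // k _; rewrite -expr2 sqr_ge0.
by rewrite mulf_eq0 orbb => /eqP.
Qed.

Variable A : 'M[R]_n.
Hypothesis AT : A^T = A.

Lemma dotv_mulmxC u v : dotv u (A *m v) = dotv (A *m u) v.
Proof. by rewrite /dotv mulmxA trmx_mul AT. Qed.

Lemma dotv_symmx u v : dotv u (A *m v) = dotv v (A *m u).
Proof. by rewrite dotv_mulmxC dotvC. Qed.

Lemma quadform_addr w d :
  dotv (w + d) (A *m (w + d)) = dotv w (A *m w) + 2 * dotv d (A *m w) + dotv d (A *m d).
Proof. by rewrite mulmxDr !(dotvDl, dotvDr) (dotv_symmx w d); ring. Qed.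

End DotProduct.

(* MathComp's spectral theorem lives over an algebraically closed field, so a
   real symmetric matrix is diagonalised inside R[i]. *)
Section Complexification.
Variables (R : realType) (n : nat).
Local Open Scope complex_scope.
Local Open Scope sesquilinear_scope.
Local Notation C := R[i].
Local Notation "M ^c" := (map_mx (real_complex R) M) (at level 1, format "M ^c").

Lemma real_complex_real (x : R) : x%:C \is Num.real.
Proof. by apply/complex_realP; exists x. Qed.

Lemma map_dotv (u v : 'cV[R]_n) : (dotv u v)%:C = (u^c ^t* *m v^c) 0 0.
Proof.
rewrite /dotv !mxE rmorph_sum; apply: eq_bigr => i _.
by rewrite !mxE rmorphM conj_Creal // real_complex_real.
Qed.

Lemma diag_quadform (d : 'rV[C]_n) (w : 'cV[C]_n) :
  (w ^t* *m diag_mx d *m w) 0 0 = \sum_i d 0 i * `|w i 0| ^+ 2.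
Proof.
rewrite mul_mx_diag mxE; apply: eq_bigr => i _.
by rewrite !mxE normCK [_^* * _]mulrC -mulrA [_^* * _]mulrC.
Qed.

Lemma realsym_spectral (A : 'M[R]_n) : A^T = A ->
  exists (P : 'M[C]_n) (d : 'rV[R]_n),
  [/\ P \is unitarymx, forall i, eigenvalue A (d 0 i) &
      A^c = P ^t* *m diag_mx d^c *m P].
Proof.
move=> AT.
have Areal : A^c \is a realmx.
  by apply/mxOverP => i j; rewrite mxE real_complex_real.
have Asym : A^c \is symmetricmx.
  by apply/is_hermitianmxP; rewrite expr0 scale1r map_mx_id // map_trmx AT.
set P := spectralmx A^c; set D := spectral_diag A^c.
have Pu : P \is unitarymx := spectral_unitarymx A^c.
have /orthomx_spectralP : A^c \is normalmx by exact: symmetric_normalmx.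
rewrite -/P -/D invmx_unitary // => AcE.
have Dreal : D \is a realmx.
  exact/hermitian_spectral_diag_real/realsym_hermsym.
exists P, (D ^ @complex.Re R); split => //; last first.
  rewrite {1}AcE; congr (_ *m diag_mx _ *m _); apply/matrixP => i j; rewrite !mxE.
  by rewrite RRe_real //; exact: (mxOverP Dreal).
move=> i; rewrite mxE.
suff : eigenvalue A^c (D 0 i) by rewrite -(RRe_real (mxOverP Dreal 0 i)) eigenvalue_map.
apply/eigenvalueP; exists (row i P).
  rewrite -row_mul AcE !mulmxA (unitarymxP Pu) mul1mx.
  by rewrite row_mul row_diag_mx -scalemxAl -rowE.
apply/eqP => Pi0; have := congr1 (row i) (unitarymxP Pu).
rewrite row_mul Pi0 mul0mx => /rowP/(_ i).
by rewrite !mxE eqxx => /eqP; rewrite eq_sym oner_eq0.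
Qed.

Lemma sym_quadform_spectral (A : 'M[R]_n) : A^T = A -> forall z : 'cV[R]_n,
  exists cw d : 'I_n -> R,
  [/\ forall i, 0 <= cw i, forall i, eigenvalue A (d i),
      dotv z z = \sum_i cw i,
      dotv z (A *m z) = \sum_i d i * cw i &
      dotv (A *m z) (A *m z) = \sum_i d i ^+ 2 * cw i].
Proof.
move=> AT z; rewrite -dotv_mulmxC //.
have [P [d [Pu eigd AcE]]] := realsym_spectral AT.
set w := P *m z^c.
have PtP : P ^t* *m P = 1%:M by rewrite -invmx_unitary // mulVmx // unitarymx_unit.
have form e : (z^c ^t* *m (P ^t* *m (diag_mx e *m (P *m z^c)))) 0 0
              = \sum_i e 0 i * `|w i 0| ^+ 2.
  by rewrite -diag_quadform /w trmx_mul map_mxM !mulmxA.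
exists (fun i => complex.Re (`|w i 0| ^+ 2)), (fun i => d 0 i).
have cwE i : (complex.Re (`|w i 0| ^+ 2))%:C = `|w i 0| ^+ 2.
  by rewrite RRe_real // rpredX // normr_real.
have sumC (F : 'I_n -> R) : (\sum_i F i)%:C = \sum_i (F i)%:C by exact: rmorph_sum.
have mulC (a c : R) : (a * c)%:C = a%:C * c%:C by exact: rmorphM.
split=> [i|//|||]; first by rewrite -ler0c cwE exprn_ge0.
all: apply: complexI; rewrite map_dotv sumC.
- rewrite -{2}[z^c]mul1mx -PtP -[P ^t*]mulmx1 -diag_const_mx -!mulmxA form.
  by apply: eq_bigr => i _; rewrite mxE mul1r cwE.
- rewrite map_mxM AcE -!mulmxA form; apply: eq_bigr => i _.
  by rewrite mulC cwE mxE.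
- rewrite !map_mxM AcE -!mulmxA [P *m (_ *m _)]mulmxA (unitarymxP Pu) mul1mx.
  rewrite [diag_mx _ *m (diag_mx _ *m _)]mulmxA mulmx_diag form.
  by apply: eq_bigr => i _; rewrite mulC cwE !mxE expr2 mulC.
Qed.
End Complexification.

Section Eigenbounds.
Variables (R : realType) (n : nat) (A : 'M[R]_n).
Hypothesis AT : A^T = A.

Lemma quadform_le_maxeig lmax : (forall l, eigenvalue A l -> l <= lmax) ->
  forall z, dotv z (A *m z) <= lmax * dotv z z.
Proof.
move=> Hmax z; have [cw [d [cw_ge0 eigd -> -> _]]] := sym_quadform_spectral AT z.
by rewrite mulr_sumr ler_sum // => i _; rewrite ler_wpM2r ?Hmax.
Qed.

Lemma mineig_quadform_le lmin : 0 <= lmin -> (forall l, eigenvalue A l -> lmin <= l) ->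
  forall z, lmin * dotv z (A *m z) <= dotv (A *m z) (A *m z).
Proof.
move=> lmin_ge0 Hmin z; have [cw [d [cw_ge0 eigd _ -> ->]]] := sym_quadform_spectral AT z.
rewrite mulr_sumr ler_sum // => i _; rewrite mulrA expr2 ler_wpM2r //.
by rewrite ler_wpM2r ?Hmin // (le_trans lmin_ge0) ?Hmin.
Qed.

End Eigenbounds.

Lemma lin_indep2P (R : realType) (n : nat) (u v : 'cV[R]_n) a c :
  lin_indep2 u v -> a *: u + c *: v = 0 -> a = 0 /\ c = 0.
Proof.
move=> /row_free_inj uv_inj uv0.
have : row_mx (a%:M : 'M_1) c%:M *m col_mx u^T v^T = 0 *m col_mx u^T v^T.
  by rewrite mul_row_col !mul_scalar_mx mul0mx -!linearZ -linearD /= uv0 trmx0.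
move=> /uv_inj /matrixP ac0; have := ac0 0 (lshift 1 0); have := ac0 0 (rshift 1 0).
by rewrite row_mxEl row_mxEr !mxE /= !mulr1n => -> ->.
Qed.

Section PositiveDefinite.
Variables (R : realType) (n : nat) (A : 'M[R]_n).
Hypothesis AT : A^T = A.
Hypothesis Apos : forall z : 'cV[R]_n, z != 0 -> 0 < dotv z (A *m z).
Local Notation q z := (dotv z (A *m z)).

Lemma quadform_ge0 z : 0 <= q z.
Proof.
have [->|z0] := eqVneq z 0; last exact/ltW/Apos.
by rewrite mulmx0 dotvE big1 // => i _; rewrite !mxE mul0r.
Qed.

Lemma eigenvalue_gt0 l : eigenvalue A l -> 0 < l.
Proof.
move=> /eigenvalueP [v vA v0].
have vT0 : v^T != 0 by rewrite trmx_eq0.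
have := Apos vT0; rewrite -AT -trmx_mul vA linearZ /= dotvZr.
by rewrite pmulr_lgt0 // dotv_gt0.
Qed.

Lemma unitmx_spd : A \in unitmx.
Proof.
have : ~~ eigenvalue A 0 by apply/negP => /eigenvalue_gt0; rewrite ltxx.
by rewrite /eigenvalue /eigenspace raddf0 subr0 negbK kermx_eq0 row_free_unit.
Qed.

Lemma gram_det_neq0 u v : lin_indep2 u v -> q v * q u - dotv u (A *m v) ^+ 2 != 0.
Proof.
move=> uv; set Q := dotv u (A *m v).
have qu_gt0 : 0 < q u.
  apply: Apos; apply: contraTneq uv => ->; apply/negP => uv0.
  have := @lin_indep2P _ _ 0 v 1 0 uv0.
  by rewrite scaler0 scale0r addr0 => /(_ erefl) [/eqP]; rewrite oner_eq0.
apply/eqP => det0.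
have : q (Q *: u + (- q u) *: v) = q u * (q v * q u - Q ^+ 2).
  rewrite quadform_addr // -!scalemxAr !(dotvZl, dotvZr) (dotv_symmx AT v u) -/Q.
  ring.
rewrite det0 mulr0 => q0.
have w0 : Q *: u + (- q u) *: v = 0.
  by apply/eqP; apply: contraFT (ltxx (0 : R)) => /Apos; rewrite q0.
by have [_ /eqP] := lin_indep2P uv w0; rewrite oppr_eq0 gt_eqF.
Qed.

Lemma quadform_le_orth w d : dotv d (A *m w) = 0 -> q w <= q (w + d).
Proof. by move=> dw0; rewrite quadform_addr // dw0 mulr0 addr0 lerDl quadform_ge0. Qed.

Lemma quadform_plane_min e g h al be u v :
  dotv g (A *m (e + al *: g + be *: h)) = 0 ->
  dotv h (A *m (e + al *: g + be *: h)) = 0 ->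
  q (e + al *: g + be *: h) <= q (e + u *: g + v *: h).
Proof.
move=> gw0 hw0.
have -> : e + u *: g + v *: h = e + al *: g + be *: h + ((u - al) *: g + (v - be) *: h).
  by apply/matrixP => i j; rewrite !mxE; ring.
by apply: quadform_le_orth; rewrite dotvDl !dotvZl gw0 hw0 !mulr0 addr0.
Qed.

Lemma steepest_descent_decrease lmin lmax e :
  0 < lmin -> lmin <= lmax ->
  (forall l, eigenvalue A l -> lmin <= l) -> (forall l, eigenvalue A l -> l <= lmax) ->
  A *m e != 0 ->
  q e - dotv (A *m e) (A *m e) ^+ 2 / q (A *m e) <= (1 - lmin / lmax) * q e.
Proof.
move=> lmin_gt0 lmin_le Hmin Hmax Ae0.
set g := A *m e; set gg := dotv g g; set P := q g.
have lmax_gt0 : 0 < lmax := lt_le_trans lmin_gt0 lmin_le.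
have P_gt0 : 0 < P := Apos Ae0.
have P_le : P <= lmax * gg := quadform_le_maxeig AT Hmax g.
have gg_ge : lmin * q e <= gg := mineig_quadform_le AT (ltW lmin_gt0) Hmin e.
rewrite mulrBl mul1r lerD2l lerN2 ler_pdivlMr // mulrAC.
apply: (@le_trans _ _ (lmin / lmax * (lmax * gg) * q e)).
  by rewrite ler_wpM2r ?quadform_ge0 // ler_wpM2l // divr_ge0 // ltW.
by rewrite mulrA divfK ?gt_eqF // mulrAC expr2 ler_wpM2r ?dotv_ge0.
Qed.

End PositiveDefinite.

Definition SD_step (R : realType) (n : nat) (A : 'M[R]_n) (b x : 'cV[R]_n) : 'cV[R]_n :=
  let g := gradf A b x in x - (dotv g g / dotv g (A *m g)) *: g.

Section EllipcentersStep.
Variables (R : realType) (n : nat) (A : 'M[R]_n) (b : 'cV[R]_n).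
Hypothesis AT : A^T = A.
Hypothesis Apos : forall z : 'cV[R]_n, z != 0 -> 0 < dotv z (A *m z).
Local Notation q z := (dotv z (A *m z)).
Let xs := invmx A *m b.
Local Notation energy z := (q (z - xs)).

Lemma mulmx_minimizer : A *m xs = b.
Proof. by rewrite mulKVmx // unitmx_spd. Qed.

Lemma gradfE z : gradf A b z = A *m (z - xs).
Proof. by rewrite /gradf mulmxBr mulmx_minimizer. Qed.

Lemma quadf_sub_min c z : quadf A b c z - quadf A b c xs = energy z / 2.
Proof.
have bE w : dotv b w = dotv xs (A *m w) by rewrite dotv_mulmxC // mulmx_minimizer.
rewrite /quadf !bE -scaleN1r quadform_addr // -!scalemxAr !(dotvZl, dotvZr).
by rewrite (dotv_symmx AT xs z); field.
Qed.

Lemma energy_SD_step x : gradf A b x != 0 ->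
  energy (SD_step A b x)
  = energy x - dotv (gradf A b x) (gradf A b x) ^+ 2 / q (gradf A b x).
Proof.
rewrite /SD_step; set g := gradf A b x => g0.
have P_gt0 : 0 < q g := Apos g0.
rewrite addrAC -scaleNr [in LHS]quadform_addr // -gradfE -/g -!scalemxAr !(dotvZl, dotvZr).
by field; rewrite gt_eqF.
Qed.

Lemma ME_step_le_SD_step x : gradf A b x != 0 ->
  energy (ME_step A b x) <= energy (SD_step A b x).
Proof.
rewrite /ME_step /SD_step; set g := gradf A b x => g0.
set h := gradf A b (x - _ *: g); set P := q g; set gg := dotv g g.
set S := q h; set Q := dotv g (A *m h).
have P_gt0 : 0 < P := Apos g0.
case: ifP => [indep|_]; last first.
  (* t is twice the exact line-search step, so the midpoint of x and y is SD_step. *)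
  have -> // : 2^-1 *: (x + (x - (2 * gg / P) *: g)) = x - (gg / P) *: g.
  by apply/matrixP => i j; rewrite !mxE; field; rewrite gt_eqF.
have det0 : S * P - Q ^+ 2 != 0 := gram_det_neq0 AT Apos indep.
rewrite (dotv_symmx AT h g) -/Q.
set al := (_ * Q - _ * S) / _; set be := (- (_ * P) + _ * Q) / _.
have -> : x - (gg / P) *: g - xs = x - xs + (- (gg / P)) *: g + 0 *: h.
  by rewrite scale0r addr0 scaleNr addrAC.
rewrite !(addrAC _ _ (- xs)).
have Ae : A *m (x - xs) = g by rewrite -gradfE.
clearbody g h.
apply: (quadform_plane_min AT Apos); rewrite 2!mulmxDr -!scalemxAr Ae !(dotvDr, dotvZr) -/P -/gg -/Q.
  by rewrite /al /be; field.
by rewrite (dotv_symmx AT h g) -/Q -/S /al /be; field.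
Qed.
Lemma ME_step_contract lmin lmax x :
  0 < lmin -> lmin <= lmax ->
  (forall l, eigenvalue A l -> lmin <= l) -> (forall l, eigenvalue A l -> l <= lmax) ->
  gradf A b x != 0 -> energy (ME_step A b x) <= (1 - lmin / lmax) * energy x.
Proof.
move=> lmin_gt0 lmin_le Hmin Hmax g0.
apply: (le_trans (ME_step_le_SD_step g0)); rewrite energy_SD_step // gradfE.
by apply: steepest_descent_decrease; rewrite // -gradfE.
Qed.

End EllipcentersStep.

Lemma sqrtrX (R : rcfType) (a : R) k : 0 <= a -> Num.sqrt (a ^+ k) = Num.sqrt a ^+ k.
Proof.
by move=> a_ge0; elim: k => [|k IH]; rewrite ?expr0 ?sqrtr1 // !exprS sqrtrM ?IH.
Qed.

Lemma geometric_decay (R : realDomainType) (u : nat -> R) (eta : R) : 0 <= eta ->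
  (forall k, (1 <= k)%N -> u k.+1 <= eta * u k) ->
  forall k, (1 <= k)%N -> u k.+1 <= eta ^+ k * u 1.
Proof.
move=> eta_ge0 Hu; elim=> [//|[|k] IH] _; first by rewrite expr1 Hu.
by rewrite exprS -mulrA (le_trans (Hu _ _)) // ler_wpM2l ?IH.
Qed.

Theorem mainTheorem4 (R : realType) (n : nat) (A : 'M[R]_n) (b : 'cV[R]_n) (c : R)
  (lmin lmax : R) (x : nat -> 'cV[R]_n) :
  spd A ->
  eigenvalue A lmin -> (forall l, eigenvalue A l -> lmin <= l) ->
  eigenvalue A lmax -> (forall l, eigenvalue A l -> l <= lmax) ->
  (forall k, (1 <= k)%N -> gradf A b (x k) != 0 -> x k.+1 = ME_step A b (x k)) ->
  let xstar := invmx A *m b in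
  (forall k, (1 <= k)%N -> gradf A b (x k) = 0 -> x k = xstar) /\
  ((forall k, (1 <= k)%N -> gradf A b (x k) != 0) ->
   exists eta : R, [/\ 0 <= eta, eta < 1, eta <= 1 - lmin / lmax &
     forall k, (1 <= k)%N ->
       quadf A b c (x k.+1) - quadf A b c xstar <= eta ^+ k * (quadf A b c (x 1) - quadf A b c xstar)
       /\ normA A (x k.+1 - xstar) <= Num.sqrt eta ^+ k * normA A (x 1 - xstar)]).
Proof.
move=> [AT Apos] Emin Hmin Emax Hmax Hstep xstar.
split=> [k _ /eqP|Hall].
  by rewrite /gradf subr_eq0 => /eqP Axb; rewrite /xstar -Axb mulKmx // unitmx_spd.
have lmin_gt0 := eigenvalue_gt0 AT Apos Emin.
have lmin_le := Hmin _ Emax.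
have ratio_gt0 : 0 < lmin / lmax by rewrite divr_gt0 // (lt_le_trans lmin_gt0).
have ratio_le1 : lmin / lmax <= 1 by rewrite ler_pdivrMr ?mul1r // (lt_le_trans lmin_gt0).
have eta_ge0 : 0 <= 1 - lmin / lmax by rewrite subr_ge0.
exists (1 - lmin / lmax); split=> // [|k k1]; first by rewrite ltrBlDr ltrDl.
pose energy z := dotv (z - xstar) (A *m (z - xstar)).
have step j : (1 <= j)%N -> energy (x j.+1) <= (1 - lmin / lmax) * energy (x j).
  by move=> j1; rewrite /energy Hstep ?Hall //; apply: ME_step_contract; rewrite ?Hall.
have := geometric_decay eta_ge0 step k1; rewrite /energy => decay.
rewrite !quadf_sub_min //; split.
  by rewrite mulrA ler_pM2r ?invr_gt0.
rewrite /normA -sqrtrX // -sqrtrM ?exprn_ge0 // ler_sqrt // mulr_ge0 ?exprn_ge0 //.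
exact: quadform_ge0.
Qed.
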